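(* Let $n,m\in\mathbb{N}$, $f:\mathbb{F}_2^n\to\mathbb{F}_2$, $S\subseteq\mathbb{F}_2^n$, and let $g:\mathbb{F}_2^n\to\mathbb{F}_2$ be the indicator of $S$ ($g(\mathbf{x})=1$ iff $\mathbf{x}\in S$). Then, when the two-query algorithm $A^{(m)2,3}_n(g,f,f)$ is executed, the probability that the driving qubit is measured as $\ket{1}$ equals $p:=2^{-n}\sum_{\mathbf{x}\in S}|\mathcal{H}^{(m)}_f(\mathbf{x})|^2$.
   Context: $\zeta_m=e^{2\pi i/m}$; $wt$ is Hamming weight; $\mathbf{x}\cdot\mathbf{y}=\bigoplus_i x_iy_i$. The $m$-Hadamard transform is $\mathcal{H}^{(m)}_f(\boldsymbol{\omega})=2^{-n/2}\sum_{\mathbf{x}}(-1)^{f(\mathbf{x})\oplus\mathbf{x}\cdot\boldsymbol{\omega}}\zeta_m^{wt(\mathbf{x})}$. Quantum gates: $\mathrm{H}$ is the Hadamard gate; $\Omega_m=\frac{1}{\sqrt2}\begin{pmatrix}1&\zeta_m\\1&-\zeta_m\end{pmatrix}$; $\mathrm{S}_m=\mathrm{diag}(1,\zeta_m)$; for a Boolean function $f$, $U_f$ denotes the phase oracle $\ket{\mathbf{x}}\mapsto(-1)^{f(\mathbf{x})}\ket{\mathbf{x}}$ on $n$ qubits (realized via an ancilla in state $\ket{-}$). Algorithm $A^{(m)2,3}_n(f_1,f_2,f_3)$: start with a driving qubit in $\ket{+}$ and an $n$-qubit register in $\ket{0^n}$; apply $\mathrm{H}^{\otimes n}$ to the register;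 then, controlled on the driving qubit being $\ket{0}$, apply to the register in order $U_{f_2}$, $\Omega_m^{\otimes n}$, $U_{f_1}$, $\mathrm{H}^{\otimes n}$; controlled on the driving qubit being $\ket{1}$, apply in order $\mathrm{S}_m^{\otimes n}$, $U_{f_3}$; finally apply $\mathrm{H}$ to the driving qubit and measure it in the computational basis. *)

From HB Require Import structures.
From mathcomp Require Import all_boot all_order all_algebra.
From mathcomp Require Import complex.
From mathcomp Require Import reals trigo.
Set Implicit Arguments. Unset Strict Implicit. Unset Printing Implicit Defensive.
Import Order.TTheory GRing.Theory Num.Theory.
Local Open Scope ring_scope.
Local Open Scope complex_scope.

Definition bits (n : nat) := {ffun 'I_n -> bool}.

Section Q.
Variable R : realType.
Local Notation C := R[i].

(* zeta_m = e^{2 pi i / m} (for m = 0 the mathcomp convention 1/0 = 0 gives 1) *)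
Definition zeta (m : nat) : C := (cos (2 * pi / m%:R)) +i* (sin (2 * pi / m%:R)).

Definition sqrt2 : C := (Num.sqrt (2 : R))%:C.

Definition sgnb (b : bool) : C := if b then -1 else 1.

Definition wt n (x : bits n) : nat := \sum_(i < n) (x i : nat).
Definition dotb n (x y : bits n) : bool := \big[addb/false]_(i < n) (x i && y i).

Definition mHadamard n (m : nat) (f : bits n -> bool) (w : bits n) : C :=
  sqrt2 ^- n * \sum_(x : bits n) sgnb (f x (+) dotb x w) * zeta m ^+ wt x.

(* single-qubit gates as 2x2 matrices G row col (false = |0>, true = |1>) *)
Definition gH (r c : bool) : C := sgnb (r && c) / sqrt2.
Definition gOmega (m : nat) (r c : bool) : C :=
  (if c then zeta m else 1) * sgnb (r && c) / sqrt2.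
Definition gS (m : nat) (r c : bool) : C :=
  if r == c then (if c then zeta m else 1) else 0.

Definition regstate n := bits n -> C.
Definition tensorn n (G : bool -> bool -> C) (psi : regstate n) : regstate n :=
  fun y => \sum_(x : bits n) (\prod_(i < n) G (y i) (x i)) * psi x.
Definition Uf n (f : bits n -> bool) (psi : regstate n) : regstate n :=
  fun x => sgnb (f x) * psi x.
Definition ket0n n : regstate n := fun x => if x == [ffun => false] then 1 else 0.

(* Algorithm A^{(m)2,3}_n(f1,f2,f3): joint state indexed by (driving bit, register) *)
Definition alg_final_state n (m : nat) (f1 f2 f3 : bits n -> bool) : bool -> regstate n :=
  let psi0 := tensorn gH (@ket0n n) in
  let branch0 := tensorn gH (Uf f1 (tensorn (gOmega m) (Uf f2 psi0))) in
  let branch1 := Uf f3 (tensorn (gS m) psi0) in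
  (* state after the controlled operations: (|0> (x) branch0 + |1> (x) branch1)/sqrt2 *)
  let st := fun (c : bool) (y : bits n) => (if c then branch1 y else branch0 y) / sqrt2 in
  fun d y => \sum_(c : bool) gH d c * st c y.

Definition alg_prob n (m : nat) (f1 f2 f3 : bits n -> bool) (b : bool) : C :=
  \sum_(y : bits n) `|alg_final_state m f1 f2 f3 b y| ^+ 2.

End Q.

From Pilot Require Import Defs.
From HB Require Import structures.
From mathcomp Require Import all_boot all_order all_algebra.
From mathcomp Require Import complex.
From mathcomp Require Import reals trigo.
From mathcomp Require Import ring.
Import Order.TTheory GRing.Theory Num.Theory.
Local Open Scope ring_scope.

(** Since Omega = H S as 2x2 matrices and H is an involution, H^n Omega^n = S^n.
   Diagonal operators commute, so the |1> branch U_f S^n psi0 equals H^n t, where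
   t = Omega^n U_f psi0 is the state the |0> branch has before U_g; and
   t = 2^(-n/2) H^(m)_f.  Hence the |1> amplitude after the final Hadamard is
   H^n ((U_g - 1) t) / 2.  As H^n is unitary, the probability is
   1/4 sum_x |(U_g - 1) t x|^2 = sum_(x in S) |t x|^2 = 2^-n sum_(x in S) |H^(m)_f x|^2. *)

Lemma bits_neq n (x y : bits n) : x != y -> exists i, x i != y i.
Proof.
move=> neq_xy; apply/existsP; apply: contraR neq_xy => /existsPn eq_xy.
by apply/eqP/ffunP => i; apply/eqP/negbNE.
Qed.

Lemma dotbC n (x y : bits n) : dotb x y = dotb y x.
Proof. by apply: eq_bigr => i _; rewrite andbC. Qed.

Lemma dotbx0 n (x : bits n) : dotb x [ffun => false] = false.
Proof. by apply: big1 => i _; rewrite ffunE andbF. Qed.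

Section Qubits.
Set Implicit Arguments. Unset Strict Implicit.
Variable R : realType.
Local Open Scope complex_scope.
Local Notation C := R[i].
Local Notation s := (sqrt2 R).
Local Notation sgnb := (sgnb R).
Local Notation zeta := (zeta R).
Local Notation gH := (gH R).
Local Notation gS := (gS R).
Local Notation gOmega := (gOmega R).

Lemma sqrt2_sqr : s ^+ 2 = 2.
Proof. by rewrite /sqrt2 -rmorphXn /= sqr_sqrtr ?ler0n // rmorph_nat. Qed.

Lemma sqrt2_neq0 : s != 0.
Proof. by apply: contra_eq_neq sqrt2_sqr => ->; rewrite expr0n eq_sym pnatr_eq0. Qed.

Lemma conjc_sqrt2 : s^* = s.
Proof. exact: conjc_real. Qed.

Lemma sqr_norm_sqrt2 : `|s| ^+ 2 = 2.
Proof. by rewrite sqr_normc conjc_sqrt2 -expr2 sqrt2_sqr. Qed.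

Lemma sqr_norm_invsqrt2X n (z : C) : `|s^-1 ^+ n * z| ^+ 2 = 2 ^- n * `|z| ^+ 2.
Proof. by rewrite normrM normrX normfV exprMn exprAC exprVn sqr_norm_sqrt2 exprVn. Qed.

Lemma sgnb_addb a b : sgnb (a (+) b) = sgnb a * sgnb b.
Proof. by case: a; case: b; rewrite /Defs.sgnb /= ?mulN1r ?opprK ?mul1r. Qed.

Lemma conjc_sgnb b : (sgnb b)^* = sgnb b.
Proof. by case: b; rewrite /Defs.sgnb ?rmorphN1 ?rmorph1. Qed.

Lemma sgnb_dotb n (x y : bits n) : sgnb (dotb x y) = \prod_(i < n) sgnb (x i && y i).
Proof. exact: (big_morph sgnb sgnb_addb). Qed.

Lemma zeta_wt m n (x : bits n) :
  zeta m ^+ wt x = \prod_(i < n) (if x i then zeta m else 1).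
Proof.
rewrite (big_morph (fun k => zeta m ^+ k) (exprD _) (expr0 _)).
by apply: eq_bigr => i _; case: (x i).
Qed.

Lemma tensorn_comp n (G G' G'' : bool -> bool -> C) (psi : regstate R n) y :
  (forall r c, \sum_k G r k * G' k c = G'' r c) ->
  tensorn G (tensorn G' psi) y = tensorn G'' psi y.
Proof.
move=> GG'; rewrite /tensorn.
under eq_bigr => x _ do rewrite mulr_sumr.
rewrite exchange_big; apply: eq_bigr => z _ /=.
under eq_bigr => x _ do rewrite mulrA -big_split /=.
under [in RHS]eq_bigr => i _ do rewrite -GG'.
by rewrite bigA_distr_bigA mulr_suml.
Qed.

Lemma tensorn_diag n (G : bool -> bool -> C) (d : bool -> C) (psi : regstate R n) y :
  (forall r c, G r c = if r == c then d c else 0) ->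
  tensorn G psi y = (\prod_(i < n) d (y i)) * psi y.
Proof.
move=> Gdiag; rewrite /tensorn (bigD1 y) //= [X in _ + X]big1 ?addr0.
  by congr (_ * _); apply: eq_bigr => i _; rewrite Gdiag eqxx.
move=> x /bits_neq [i neq_xy].
by rewrite (bigD1 i) //= Gdiag eq_sym (negbTE neq_xy) !mul0r.
Qed.

Lemma tensornB n (G : bool -> bool -> C) (psi phi : regstate R n) y :
  tensorn G psi y - tensorn G phi y = tensorn G (fun x => psi x - phi x) y.
Proof. by rewrite -sumrB; apply: eq_bigr => x _; rewrite mulrBr. Qed.

Lemma gH_mulgH r c : \sum_k gH r k * gH k c = if r == c then 1 else 0.
Proof.
rewrite big_bool /Defs.gH; case: r; case: c; rewrite /Defs.sgnb /=;
  field: sqrt2_sqr; exact: sqrt2_neq0.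
Qed.

Lemma gH_mulgS m r c : \sum_k gH r k * gS m k c = gOmega m r c.
Proof.
rewrite big_bool /Defs.gS /Defs.gOmega /Defs.gH; case: r; case: c; rewrite /Defs.sgnb /=;
  field: sqrt2_sqr; exact: sqrt2_neq0.
Qed.

Lemma gH_mulgOmega m r c : \sum_k gH r k * gOmega m k c = gS m r c.
Proof.
rewrite big_bool /Defs.gS /Defs.gOmega /Defs.gH; case: r; case: c; rewrite /Defs.sgnb /=;
  field: sqrt2_sqr; exact: sqrt2_neq0.
Qed.

Lemma tensorn_gH_gH n (psi : regstate R n) y : tensorn gH (tensorn gH psi) y = psi y.
Proof.
rewrite (tensorn_comp _ _ gH_mulgH) (@tensorn_diag _ _ (fun=> 1)) //.
by rewrite prodr_const expr1n mul1r.
Qed.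

Lemma tensorn_gH_gOmega m n (psi : regstate R n) y :
  tensorn gH (tensorn (gOmega m) psi) y = tensorn (gS m) psi y.
Proof. exact: tensorn_comp (gH_mulgOmega m). Qed.

Lemma tensorn_gSE m n (psi : regstate R n) y :
  tensorn (gS m) psi y = zeta m ^+ wt y * psi y.
Proof. by rewrite (@tensorn_diag _ _ (fun c => if c then zeta m else 1)) // zeta_wt. Qed.

Lemma Uf_tensorn_gS m n (f : bits n -> bool) (psi : regstate R n) y :
  Uf f (tensorn (gS m) psi) y = tensorn (gS m) (Uf f psi) y.
Proof. by rewrite /Uf !tensorn_gSE mulrCA. Qed.

Lemma tensorn_gHE n (psi : regstate R n) y :
  tensorn gH psi y = s^-1 ^+ n * \sum_(x : bits n) sgnb (dotb y x) * psi x.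
Proof.
rewrite mulr_sumr; apply: eq_bigr => x _.
by rewrite sgnb_dotb big_split /= prodr_const card_ord mulrA [_ * _ ^+ n]mulrC.
Qed.

Lemma tensorn_gH_ket0n n y : tensorn gH (@ket0n R n) y = s^-1 ^+ n.
Proof.
rewrite tensorn_gHE (bigD1 [ffun => false]) //= [X in _ + X]big1 ?addr0.
  by rewrite /ket0n eqxx dotbx0 !mulr1.
by move=> x /negbTE neq_x0; rewrite /ket0n neq_x0 mulr0.
Qed.

Lemma tensorn_gOmega_Uf_ket0n m n (f : bits n -> bool) y :
  tensorn (gOmega m) (Uf f (tensorn gH (@ket0n R n))) y = s^-1 ^+ n * mHadamard R m f y.
Proof.
rewrite -(tensorn_comp _ _ (gH_mulgS m)) tensorn_gHE /mHadamard -exprVn.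
rewrite [in RHS]mulr_sumr; congr (_ * _); apply: eq_bigr => x _.
by rewrite tensorn_gSE /Uf tensorn_gH_ket0n sgnb_addb dotbC; ring.
Qed.

Definition inner n (psi phi : regstate R n) : C := \sum_y psi y * (phi y)^*.

Lemma inner_tensorn_sym n (G : bool -> bool -> C) (psi phi : regstate R n) :
  (forall r c, G r c = G c r) -> (forall r c, (G r c)^* = G r c) ->
  inner (tensorn G psi) phi = inner psi (tensorn G phi).
Proof.
move=> Gsym Greal; rewrite /inner /tensorn.
under eq_bigr => y _ do rewrite mulr_suml.
rewrite exchange_big; apply: eq_bigr => x _ /=.
rewrite (rmorph_sum conjc) mulr_sumr; apply: eq_bigr => y _.
rewrite (rmorphM conjc) (rmorph_prod conjc) /=.
under [in RHS]eq_bigr => i _ do rewrite Greal Gsym.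
by rewrite [RHS]mulrCA mulrA.
Qed.

Lemma inner_tensorn_gH n (psi phi : regstate R n) :
  inner (tensorn gH psi) (tensorn gH phi) = inner psi phi.
Proof.
have gH_sym r c : gH r c = gH c r by rewrite /Defs.gH andbC.
have gH_real r c : (gH r c)^* = gH r c.
  by rewrite /Defs.gH (conjc_is_multiplicative _).1 conjc_inv conjc_sgnb conjc_sqrt2.
rewrite inner_tensorn_sym //; apply: eq_bigr => y _.
by rewrite tensorn_gH_gH.
Qed.

Lemma sum_sqr_norm_tensorn_gH n (psi : regstate R n) :
  \sum_y `|tensorn gH psi y| ^+ 2 = \sum_y `|psi y| ^+ 2.
Proof.
under eq_bigr do rewrite sqr_normc.
under [RHS]eq_bigr do rewrite sqr_normc.
exact: inner_tensorn_gH.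
Qed.

Lemma sum_sqr_norm_tensorn_gH_UfB n (S : {set bits n}) (psi : regstate R n) :
  \sum_y `|(tensorn gH (Uf (fun x => x \in S) psi) y - tensorn gH psi y) / 2| ^+ 2 =
  \sum_(x in S) `|psi x| ^+ 2.
Proof.
under eq_bigr do rewrite tensornB normrM exprMn.
rewrite -mulr_suml sum_sqr_norm_tensorn_gH mulr_suml [RHS]big_mkcond.
apply: eq_bigr => x _; rewrite /Uf /Defs.sgnb; case: (x \in S).
  by rewrite mulN1r -opprD normrN -mulr2n normrMn normfV normr_nat; field.
by rewrite mul1r subrr normr0 expr0n mul0r.
Qed.

Lemma alg_final_state_true m n (f1 f2 f3 : bits n -> bool) y :
  let psi0 := tensorn gH (@ket0n R n) in
  alg_final_state R m f1 f2 f3 true y =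
    (tensorn gH (Uf f1 (tensorn (gOmega m) (Uf f2 psi0))) y
     - Uf f3 (tensorn (gS m) psi0) y) / 2.
Proof.
rewrite /alg_final_state big_bool /Defs.gH /Defs.sgnb /=.
field: sqrt2_sqr; exact: sqrt2_neq0.
Qed.

End Qubits.

Theorem proposition1 (R : realType) (n m : nat) (f : bits n -> bool) (S : {set bits n}) :
  let g := fun x : bits n => x \in S in
  alg_prob R m g f f true =
    (2%:R ^- n) * \sum_(x in S) `|mHadamard R m f x| ^+ 2.
Proof.
move=> g; rewrite /alg_prob.
set psi0 := tensorn (gH R) (@ket0n R n).
set t := tensorn (gOmega R m) (Uf f psi0).
have branch1E y : Uf f (tensorn (gS R m) psi0) y = tensorn (gH R) t y.
  by rewrite Uf_tensorn_gS -tensorn_gH_gOmega.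
under eq_bigr do rewrite alg_final_state_true branch1E.
rewrite sum_sqr_norm_tensorn_gH_UfB mulr_sumr; apply: eq_bigr => x _.
by rewrite tensorn_gOmega_Uf_ket0n sqr_norm_invsqrt2X.
Qed.
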